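(* Let $X$ be a compact metric space and $f\colon X\to X$ continuous. Let $(Z_n^1)_n,\dots,(Z_n^k)_n$ be a finite collection of sequences of subsets of $X$, and write $Z_n=\bigcup_{j=1}^kZ_n^j$. Then for every $\xi\in C(X)$, $$\overline{CP}_{(Z_n)}(\xi)=\max_{1\le j\le k}\overline{CP}_{(Z_n^j)_n}(\xi).$$
   Context: $S_n\xi=\sum_{i=0}^{n-1}\xi\circ f^i$; $B(x,n,\delta)=\{y\mid d(f^ix,f^iy)<\delta,\ 0\le i\le n\}$. For a sequence $(Y_n)$ of subsets, $\Lambda_n(Y_n,\xi,\delta)=\inf\{\sum_{x\in E}e^{S_n\xi(x)}\mid\bigcup_{x\in E}B(x,n,\delta)\supset Y_n\}$ and the upper capacity pressure is $\overline{CP}_{(Y_n)}(\xi)=\lim_{\delta\to0}\limsup_{n\to\infty}\frac1n\log\Lambda_n(Y_n,\xi,\delta)$. *)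

From HB Require Import structures.
From mathcomp Require Import all_boot all_order all_algebra finmap.
From mathcomp Require Import all_classical all_reals all_analysis.
Set Implicit Arguments. Unset Strict Implicit. Unset Printing Implicit Defensive.
Import Order.TTheory GRing.Theory Num.Theory.
Import numFieldNormedType.Exports.
Local Open Scope classical_set_scope.
Local Open Scope ring_scope.

Section CapacityPressure.
Context {R : realType} {X : metricType R}.

Definition birk_sum (f : X -> X) (xi : X -> R) (n : nat) (x : X) : R :=
  \sum_(0 <= i < n) xi (iter i f x).

Definition bowen_ball (f : X -> X) (x : X) (n : nat) (delta : R) : set X :=
  [set y | forall i : nat, (i <= n)%N -> mdist (iter i f x) (iter i f y) < delta].

Definition Lambda (f : X -> X) (xi : X -> R) (delta : R) (n : nat) (Y : set X)
  : \bar R :=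
  ereal_inf [set (\sum_(x <- E) expR (birk_sum f xi n x))%:E
            | E in [set E : {fset X} |
                    Y `<=` [set y | exists2 x, x \in E & bowen_ball f x n delta y]]].

Definition elog (a : \bar R) : \bar R :=
  match a with
  | r%:E => if (0 < r)%R then (ln r)%:E else -oo
  | +oo => +oo
  | -oo => -oo
  end%E.

Definition upper_cap_pressure (f : X -> X) (xi : X -> R) (Y : nat -> set X)
  : \bar R :=
  lim ((fun delta : R =>
          limn_esup (fun n : nat => ((n%:R)^-1)%:E * elog (Lambda f xi delta n (Y n)))%E)
       @ 0^'+).

End CapacityPressure.

(* Lambda_n(., xi, delta) is monotone and subadditive in the covered set, so
   Lambda_n(Y1 u Y2) <= 2 max(Lambda_n Y1, Lambda_n Y2) and the factor 2 costs
   only (ln 2)/n after taking (1/n) log; hence the limsup in n of the union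
   sequence is the max of the two limsups.  The limit delta -> 0 is a monotone
   supremum and commutes with max as well; induction on k finishes. *)

From HB Require Import structures.
From mathcomp Require Import all_boot all_order all_algebra finmap.
From mathcomp Require Import all_classical all_reals all_analysis.
From mathcomp Require Import lra.
Import Order.TTheory GRing.Theory Num.Theory.
Import numFieldNormedType.Exports.
Local Open Scope classical_set_scope.
Local Open Scope ring_scope.

Lemma ler_sum_fsetU {T : choiceType} {R : numDomainType} (F : T -> R)
    (A B : {fset T}) : (forall x, 0 <= F x) ->
  \sum_(x <- (A `|` B)%fset) F x <= \sum_(x <- A) F x + \sum_(x <- B) F x.
Proof.
move=> F0.
rewrite (big_fsetID _ (mem A)) [X in _ <= _ + X](big_fsetID _ (mem A)) /=.
have -> : \sum_(i <- [fset x in (A `|` B)%fset | mem A x]%fset) F i =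
    \sum_(x <- A) F x.
  by apply: eq_fbigl => i; rewrite !inE /=; case: (i \in A); rewrite ?andbF.
have -> : \sum_(i <- [fset x in (A `|` B)%fset | ~~ mem A x]%fset) F i =
    \sum_(i <- [fset x in B | ~~ mem A x]%fset) F i.
  by apply: eq_fbigl => i; rewrite !inE /=; case: (i \in A); rewrite ?andbF.
by rewrite lerD2l lerDr sumr_ge0.
Qed.

Lemma bigcupT_ord {T : Type} k (F : 'I_k -> set T) :
  \bigcup_(j in [set: 'I_k]) F j = \big[setU/set0]_(j < k) F j.
Proof.
rewrite -big_enum -bigcup_seq; apply: eq_bigcupl.
by split=> j _ //=; rewrite mem_enum.
Qed.

Section LimfEsup.
Context {R : realType} {S : choiceType} {T : filteredType S}.
Context (F : set_system T) {FF : Filter F}.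
Implicit Types u v : T -> \bar R.
Local Open Scope ereal_scope.

Lemma le_limf_esup_near u v : (\forall x \near F, u x <= v x) ->
  limf_esup u F <= limf_esup v F.
Proof.
move=> uv; apply: le_ereal_inf_tmp => _ [V FV <-].
apply: ge_ereal_inf; exists (ereal_sup (u @` (V `&` [set x | u x <= v x]))).
  by exists (V `&` [set x | u x <= v x]) => //; apply: filterI.
apply: ge_ereal_sup => _ [x [Vx /= uvx] <-].
by apply: le_trans uvx _; apply: ereal_sup_ubound; exists x.
Qed.

Lemma limf_esup_maxe u v :
  limf_esup (fun x => maxe (u x) (v x)) F <=
  maxe (limf_esup u F) (limf_esup v F).
Proof.
rewrite leNgt gt_max; apply/negP => /andP[].
move=> /ereal_inf_lt[_ [V1 FV1 <-] V1u] /ereal_inf_lt[_ [V2 FV2 <-] V2v].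
suff : limf_esup (fun x => maxe (u x) (v x)) F <=
    maxe (ereal_sup (u @` V1)) (ereal_sup (v @` V2)).
  by rewrite leNgt gt_max V1u V2v.
apply: ge_ereal_inf.
exists (ereal_sup ((fun x => maxe (u x) (v x)) @` (V1 `&` V2))).
  by exists (V1 `&` V2) => //; apply: filterI.
apply: ge_ereal_sup => _ [x [V1x V2x] <-].
by apply: le_max2; apply: ereal_sup_ubound; exists x.
Qed.

Lemma limf_esupD_vanishing (c : T -> R) u :
    (forall e : R, (0 < e)%R -> \forall x \near F, (c x <= e)%R) ->
  limf_esup (fun x => (c x)%:E + u x) F <= limf_esup u F.
Proof.
move=> c_small; apply/lee_addgt0Pr => e e0.
rewrite -leeBlDr // [X in _ <= X]/limf_esup.
apply: le_ereal_inf_tmp => _ [V FV <-]; rewrite leeBlDr //.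
apply: ge_ereal_inf.
exists (ereal_sup ((fun x => (c x)%:E + u x) @` (V `&` [set x | (c x <= e)%R]))).
  exists (V `&` [set x | (c x <= e)%R]) => //.
  by apply: filterI => //; exact: c_small.
apply: ge_ereal_sup => _ [x [Vx /= cxe] <-].
by rewrite addeC leeD ?lee_fin //; apply: ereal_sup_ubound; exists x.
Qed.

End LimfEsup.

Lemma invn_mulr_small {R : realType} (c e : R) : 0 < e ->
  \forall n \near \oo, (n%:R)^-1 * c <= e.
Proof.
move=> e0; exists (Num.truncn (c / e)).+1 => // n /= Nn.
have n0 : 0 < n%:R :> R by rewrite ltr0n (leq_trans _ Nn).
have ceN : c / e < n%:R by apply: lt_le_trans (truncnS_gt _) _; rewrite ler_nat.
by rewrite mulrC ler_pdivrMr // mulrC ltW // -ltr_pdivrMr.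
Qed.

Lemma ereal_sup_maxe {R : realType} {T : Type} (A : set T) (g h : T -> \bar R) :
  ereal_sup ((fun t => maxe (g t) (h t)) @` A) =
  maxe (ereal_sup (g @` A)) (ereal_sup (h @` A)).
Proof.
apply/eqP; rewrite eq_le ge_max; apply/and3P; split.
- apply: ge_ereal_sup => _ [t At <-].
  by apply: le_max2; apply: ereal_sup_ubound; exists t.
- apply: ge_ereal_sup => _ [t At <-]; apply: le_ereal_sup_tmp.
  by exists (maxe (g t) (h t)); [exists t|rewrite le_max lexx].
- apply: ge_ereal_sup => _ [t At <-]; apply: le_ereal_sup_tmp.
  by exists (maxe (g t) (h t)); [exists t|rewrite le_max lexx orbT].
Qed.

Section ElogBounds.
Context {R : realType}.
Local Open Scope ereal_scope.

Lemma le_elog : {homo @elog R : x y / x <= y}.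
Proof.
move=> [r| |] [s| |] //=; rewrite ?lee_fin ?leey ?leNye // => rs.
case: ifPn => r0; last by rewrite leNye.
by rewrite (lt_le_trans r0 rs) lee_fin ler_ln // posrE (lt_le_trans r0 rs).
Qed.

Lemma elogD_le (x y : \bar R) : 0 <= x -> x <= y ->
  elog (x + y) <= (ln 2)%:E + elog y.
Proof.
case: x => [r| |]; case: y => [s| |] //=; rewrite ?lee_fin => r0 rs.
case: ifPn => rs0; last by rewrite leNye.
have s0 : (0 < s)%R by lra.
rewrite s0 -EFinD lee_fin -lnM ?posrE // ler_ln ?posrE ?mulr_gt0 //.
by rewrite mulr_natl mulr2n lerD2r.
Qed.

End ElogBounds.

Section BowenCovers.
Context {R : realType} {X : metricType R} (f : X -> X) (xi : X -> R).
Local Open Scope ereal_scope.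

Definition bowen_cover (delta : R) (n : nat) (E : {fset X}) (Y : set X) : Prop :=
  Y `<=` [set y | exists2 x, x \in E & bowen_ball f x n delta y].

Definition cover_weight (n : nat) (E : {fset X}) : R :=
  \sum_(x <- E) expR (birk_sum f xi n x).

Lemma LambdaE delta n Y : Lambda f xi delta n Y =
  ereal_inf [set (cover_weight n E)%:E | E in [set E | bowen_cover delta n E Y]].
Proof. by []. Qed.

Lemma Lambda_ge0 delta n Y : 0 <= Lambda f xi delta n Y.
Proof.
apply: le_ereal_inf_tmp => _ [E _ <-].
by rewrite lee_fin sumr_ge0 // => x _; exact: expR_ge0.
Qed.

Lemma Lambda_le_weight {delta n E Y} : bowen_cover delta n E Y ->
  Lambda f xi delta n Y <= (cover_weight n E)%:E.
Proof. by move=> EY; apply: ereal_inf_lbound; exists E. Qed.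

Lemma Lambda_adherent {delta n Y} {e : R} : (0 < e)%R ->
    Lambda f xi delta n Y \is a fin_num ->
  exists2 E, bowen_cover delta n E Y &
    (cover_weight n E)%:E < Lambda f xi delta n Y + e%:E.
Proof.
by rewrite LambdaE => e0 /(lb_ereal_inf_adherent e0)[_ [E EY <-]]; exists E.
Qed.

Lemma le_Lambda delta n (Y Y' : set X) : Y `<=` Y' ->
  Lambda f xi delta n Y <= Lambda f xi delta n Y'.
Proof.
move=> YY'; apply: ereal_inf_le_tmp => _ [E EY' <-]; exists E => //.
exact: subset_trans EY'.
Qed.

Lemma Lambda_antitone n Y :
  {homo (fun d => Lambda f xi d n Y) : d d' / (d <= d')%R >-> d' <= d}.
Proof.
move=> d d' dd'; apply: ereal_inf_le_tmp => _ [E EY <-]; exists E => //.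
move=> y /EY[x xE Bxy]; exists x => // i ni.
exact: lt_le_trans (Bxy i ni) dd'.
Qed.

Lemma bowen_coverU {delta n E1 E2 Y1 Y2} :
  bowen_cover delta n E1 Y1 -> bowen_cover delta n E2 Y2 ->
  bowen_cover delta n (E1 `|` E2)%fset (Y1 `|` Y2).
Proof.
move=> EY1 EY2 y [/EY1|/EY2] [x xE Bxy]; exists x => //.
all: by rewrite inE xE ?orbT.
Qed.

Lemma Lambda_setU delta n (Y1 Y2 : set X) :
  Lambda f xi delta n (Y1 `|` Y2) <=
  Lambda f xi delta n Y1 + Lambda f xi delta n Y2.
Proof.
set L1 := Lambda _ _ _ _ Y1; set L2 := Lambda _ _ _ _ Y2.
have L10 : 0 <= L1 := Lambda_ge0 _ _ _; have L20 : 0 <= L2 := Lambda_ge0 _ _ _.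
have [->|L1oo] := eqVneq L1 +oo.
  by rewrite addye ?leey // gt_eqF // (lt_le_trans _ L20).
have [->|L2oo] := eqVneq L2 +oo.
  by rewrite addey ?leey // gt_eqF // (lt_le_trans _ L10).
have L1fin : L1 \is a fin_num by rewrite ge0_fin_numE // ltey.
have L2fin : L2 \is a fin_num by rewrite ge0_fin_numE // ltey.
apply/lee_addgt0Pr => e e0; have e20 : (0 < e / 2)%R by rewrite divr_gt0.
have [E1 EY1 E1e] := Lambda_adherent e20 L1fin.
have [E2 EY2 E2e] := Lambda_adherent e20 L2fin.
apply: le_trans (Lambda_le_weight (bowen_coverU EY1 EY2)) _.
apply: (@le_trans _ _ ((cover_weight n E1)%:E + (cover_weight n E2)%:E)).
  by rewrite -EFinD lee_fin ler_sum_fsetU // => x; exact: expR_ge0.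
rewrite [e]splitr EFinD addeACA; apply: leeD; exact: ltW.
Qed.

End BowenCovers.

Section CapacityPressureUnion.
Context {R : realType} {X : metricType R} (f : X -> X) (xi : X -> R).
Local Open Scope ereal_scope.

Definition pressure_seq (delta : R) (Y : nat -> set X) (n : nat) : \bar R :=
  ((n%:R)^-1)%:E * elog (Lambda f xi delta n (Y n)).

Definition scale_pressure (Y : nat -> set X) (delta : R) : \bar R :=
  limn_esup (pressure_seq delta Y).

Lemma le_pressure_seq delta (Y Y' : nat -> set X) n : Y n `<=` Y' n ->
  pressure_seq delta Y n <= pressure_seq delta Y' n.
Proof.
move=> YY'; rewrite lee_wpmul2l ?lee_fin ?invr_ge0 //.
exact/le_elog/le_Lambda.
Qed.

Lemma pressure_seq_antitone Y n :
  {homo (fun d => pressure_seq d Y n) : d d' / (d <= d')%R >-> d' <= d}.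
Proof.
move=> d d' dd'; rewrite lee_wpmul2l ?lee_fin ?invr_ge0 //.
exact/le_elog/Lambda_antitone.
Qed.

Lemma pressure_seq_setU delta (Y1 Y2 : nat -> set X) n :
  pressure_seq delta (fun m => Y1 m `|` Y2 m) n <=
  ((n%:R)^-1 * ln 2)%:E + maxe (pressure_seq delta Y1 n) (pressure_seq delta Y2 n).
Proof.
have n0 : 0 <= ((n%:R)^-1)%:E :> \bar R by rewrite lee_fin invr_ge0.
wlog L12 : Y1 Y2 / Lambda f xi delta n (Y1 n) <= Lambda f xi delta n (Y2 n).
  move=> wlog_L12.
  have [|/ltW L21] := leP (Lambda f xi delta n (Y1 n)) (Lambda f xi delta n (Y2 n)).
    exact: wlog_L12.
  rewrite maxC; apply: le_trans (wlog_L12 _ _ L21).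
  by apply: le_pressure_seq; rewrite setUC.
apply: (@le_trans _ _
  (((n%:R)^-1)%:E * ((ln 2)%:E + elog (Lambda f xi delta n (Y2 n))))).
  apply: lee_wpmul2l => //.
  apply: le_trans (le_elog _ _ (Lambda_setU f xi delta n (Y1 n) (Y2 n))) _.
  exact: elogD_le (Lambda_ge0 f xi delta n (Y1 n)) L12.
by rewrite muleDr // EFinM leeD2l // le_max lexx orbT.
Qed.

Lemma scale_pressure_setU (Y1 Y2 : nat -> set X) delta :
  scale_pressure (fun n => Y1 n `|` Y2 n) delta =
  maxe (scale_pressure Y1 delta) (scale_pressure Y2 delta).
Proof.
apply/eqP; rewrite eq_le ge_max; apply/and3P; split.
- apply: le_trans (limf_esup_maxe _ _ _).
  apply: le_trans (limf_esupD_vanishing _ _ _ (invn_mulr_small (ln 2))).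
  by apply: le_limf_esup_near; apply: nearW => n; exact: pressure_seq_setU.
- apply: le_limf_esup_near; apply: nearW => n.
  by apply: le_pressure_seq => ? ?; left.
- apply: le_limf_esup_near; apply: nearW => n.
  by apply: le_pressure_seq => ? ?; right.
Qed.

Lemma scale_pressure_antitone Y :
  {homo scale_pressure Y : d d' / (d <= d')%R >-> d' <= d}.
Proof.
move=> d d' dd'; apply: le_limf_esup_near; apply: nearW => n.
exact: pressure_seq_antitone.
Qed.

Lemma upper_cap_pressureE Y : upper_cap_pressure f xi Y =
  ereal_sup (scale_pressure Y @` [set` Interval (BRight 0%R) (BInfty R false)]).
Proof.
apply: cvg_lim => //; apply: nonincreasing_at_right_cvge => // d d' _ _.
exact: scale_pressure_antitone.
Qed.

Lemma upper_cap_pressure_setU (Y1 Y2 : nat -> set X) :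
  upper_cap_pressure f xi (fun n => Y1 n `|` Y2 n) =
  maxe (upper_cap_pressure f xi Y1) (upper_cap_pressure f xi Y2).
Proof.
rewrite !upper_cap_pressureE -ereal_sup_maxe.
by congr ereal_sup; apply: eq_imagel => d _; exact: scale_pressure_setU.
Qed.

Lemma upper_cap_pressure_bigsetU k (Z : 'I_k.+1 -> nat -> set X) :
  upper_cap_pressure f xi (fun n => \big[setU/set0]_(j < k.+1) Z j n) =
  \big[maxe/-oo]_(j < k.+1) upper_cap_pressure f xi (Z j).
Proof.
elim: k Z => [|k IH] Z.
  by under eq_fun do rewrite big_ord1; rewrite big_ord1.
rewrite big_ord_recr /=; under eq_fun do rewrite big_ord_recr /=.
by rewrite upper_cap_pressure_setU IH.
Qed.

End CapacityPressureUnion.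

Theorem lemma4p1 (R : realType) (X : metricType R) (f : X -> X)
  (hX : compact [set: X]) (hf : continuous f)
  (k : nat) (hk : (0 < k)%N) (Z : 'I_k -> nat -> set X)
  (xi : X -> R) (hxi : continuous xi) :
  upper_cap_pressure f xi (fun n => \bigcup_(j in [set: 'I_k]) Z j n) =
  (\big[Order.max/-oo]_(j < k) upper_cap_pressure f xi (Z j))%E.
Proof.
case: k hk Z => // k _ Z.
under eq_fun do rewrite bigcupT_ord.
exact: upper_cap_pressure_bigsetU.
Qed.
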